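(* Let $N=2$ with $r_{11}=1$ and $g\in(-2,2)$, $h=\sqrt{1-g^2/4}$. The length of the Finsleroid Indicatrix $\{R:K(g;R)=1\}$, measured with the Finsler metric, i.e. $L=\oint\sqrt{g_{pq}(g;R)\,dR^p\,dR^q}$ taken once around the closed curve, equals $$L=\frac{2\pi}{h}.$$ Consequently $L\ge 2\pi$, with $L=2\pi$ if and only if $g=0$, and $L\to\infty$ as $|g|\to2$.
   Context: Here $V_2=\mathbb{R}^2$ with points $R=(R^1,R^2)$, $Z=R^2$, $q(R)=|R^1|$; $G=g/h$. Define $B(g;R)=Z^2+gqZ+q^2$, $A(g;R)=Z+\frac12 gq$, $\Phi(g;R)=\arctan\big(A/(hq)\big)$ if $q>0$, $\Phi=\pi/2$ if $q=0,Z>0$, $\Phi=-\pi/2$ if $q=0,Z<0$; $J(g;R)=e^{\frac12 G\Phi}$ and the Finsleroid metric function $K(g;R)=\sqrt{B(g;R)}\,J(g;R)$ ($K(g;0)=0$). The Finsler metric tensor is $g_{pq}(g;R)=\frac12\,\partial^2K^2/\partial R^p\partial R^q$. *)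

From Stdlib Require Import Reals Lra.
From Coquelicot Require Import Coquelicot.
Open Scope R_scope.

(* N = 2, r_11 = 1.  A point R = (R^1, R^2) is written as two reals x, y. *)

Definition hF (g : R) : R := sqrt (1 - g ^ 2 / 4).
Definition GF (g : R) : R := g / hF g.

(* Z = R^2, q(R) = |R^1| *)
Definition qF (x : R) : R := Rabs x.

Definition BF (g x y : R) : R := y ^ 2 + g * qF x * y + (qF x) ^ 2.
Definition AF (g x y : R) : R := y + / 2 * g * qF x.

(* Phi; the case q = 0, Z = 0 (the origin) is irrelevant since K(g;0)=0. *)
Definition PhiF (g x y : R) : R :=
  if Rlt_dec 0 (qF x) then atan (AF g x y / (hF g * qF x))
  else if Rlt_dec 0 y then PI / 2 else - (PI / 2).

Definition JF (g x y : R) : R := exp (/ 2 * GF g * PhiF g x y).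

Definition KF (g x y : R) : R :=
  if Req_EM_T x 0 then (if Req_EM_T y 0 then 0 else sqrt (BF g x y) * JF g x y)
  else sqrt (BF g x y) * JF g x y.

Definition K2F (g x y : R) : R := (KF g x y) ^ 2.

Definition partial (p : nat) (f : R -> R -> R) (x y : R) : R :=
  match p with
  | 1%nat => Derive (fun t => f t y) x
  | _ => Derive (fun t => f x t) y
  end.

Definition gmet (g : R) (p q : nat) (x y : R) : R :=
  / 2 * partial p (partial q (K2F g)) x y.

Definition gquad (g x y v1 v2 : R) : R :=
  gmet g 1 1 x y * v1 * v1 + gmet g 1 2 x y * v1 * v2
  + gmet g 2 1 x y * v2 * v1 + gmet g 2 2 x y * v2 * v2.

Definition indicatrix_loop (g : R) (c1 c2 : R -> R) : Prop :=
  (forall t, 0 <= t <= 1 ->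
     ex_derive c1 t /\ ex_derive c2 t /\
     continuous (Derive c1) t /\ continuous (Derive c2) t) /\
  (forall t, 0 <= t <= 1 -> KF g (c1 t) (c2 t) = 1) /\
  (forall x y, KF g x y = 1 -> exists t, 0 <= t <= 1 /\ c1 t = x /\ c2 t = y) /\
  c1 0 = c1 1 /\ c2 0 = c2 1 /\
  (forall s t, 0 <= s < 1 -> 0 <= t < 1 -> c1 s = c1 t -> c2 s = c2 t -> s = t).

Definition finsler_length_is (g : R) (c1 c2 : R -> R) (L : R) : Prop :=
  is_RInt (fun t => sqrt (gquad g (c1 t) (c2 t) (Derive c1 t) (Derive c2 t))) 0 1 L.

(** Off the axis x = 0 put q = |x| and A = y + g q / 2.  Then B = (h x)^2 + A^2, so
    (X, Y) = (h x, A) / sqrt B lies on the unit circle and Phi = atan (A / (h q)) is its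
    angle; as K = sqrt B * exp (G Phi / 2), the point (X, Y) determines the point of the
    indicatrix.  Along a C^1 loop (x(t), y(t)) on the indicatrix, (X, Y) turns with angular
    velocity omega = h (x y' - y x') / B, while K^2 = 1 forces x x' + (y + g s x) y' = 0
    (s the sign of x); under this tangency condition g_pq x'^p x'^q = (omega / h)^2.  Hence
    the length is the integral of |omega| / h.  The lift theta = int omega of the angle is
    injective on [0, 1) because the loop is simple, hence monotone, and it first returns to
    a multiple of 2 PI at t = 1, so the integral of |omega| is 2 PI.  All calculus is done
    on the half planes s x > 0, where |x| is smooth; the loop meets the axis at most twice,
    and those parameters are harmless exceptions. *)

From Stdlib Require Import Reals Lra List Classical.
From Coquelicot Require Import Coquelicot.
Import ListNotations.
Open Scope R_scope.

(** * Tools from real analysis *)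

Ltac continuous_R :=
  repeat match goal with
  | |- continuous (fun x => @?f x + @?k x) _ => apply (continuous_plus (V := R_NormedModule))
  | |- continuous (fun x => @?f x - @?k x) _ => apply (continuous_minus (V := R_NormedModule))
  | |- continuous (fun x => - @?f x) _ => apply (continuous_opp (V := R_NormedModule))
  | |- continuous (fun x => @?f x * @?k x) _ => apply (continuous_mult (K := R_AbsRing))
  | |- continuous (fun x => @?f x / @?k x) _ => apply (continuous_mult (K := R_AbsRing))
  | |- continuous (fun x => / @?f x) _ => apply continuous_Rinv_comp
  | |- continuous (fun x => Rabs (@?f x)) _ => apply continuous_Rabs_comp
  | |- continuous (fun x => sqrt (@?f x)) _ => apply continuous_sqrt_comp
  | |- continuous (fun x => cos (@?f x)) _ => apply continuous_cos_comp
  | |- continuous (fun x => sin (@?f x)) _ => apply continuous_sin_comp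
  | |- continuous (fun x => x) _ => apply continuous_id
  | |- continuous (fun _ => _) _ => apply continuous_const
  end.

Ltac rewrite_Derive :=
  repeat match goal with
  | D : is_derive ?f ?t ?l |- context [Derive (fun x => ?f x) ?t] =>
      replace (Derive (fun x => f x) t) with l by (symmetry; now apply is_derive_unique)
  end.

Lemma continuous_locally_pos (f : R -> R) x :
  continuous f x -> 0 < f x -> locally x (fun r => 0 < f r).
Proof.
  intros Hc Hpos. apply Hc. exists (mkposreal (f x) Hpos). intros z Hz.
  change (Rabs (z - f x) < f x) in Hz. apply Rabs_def2 in Hz. lra.
Qed.

Lemma locally_open_interval a b t : a < t < b -> locally t (fun r => a < r < b).
Proof.
  intros Ht. assert (Hm : 0 < Rmin (t - a) (b - t)) by (apply Rmin_pos; lra).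
  exists (mkposreal _ Hm). intros r Hr. change (Rabs (r - t) < Rmin (t - a) (b - t)) in Hr.
  apply Rabs_def2 in Hr. pose proof (Rmin_l (t - a) (b - t)). pose proof (Rmin_r (t - a) (b - t)).
  lra.
Qed.

Lemma is_derive_Rmult (f k : R -> R) x df dk l :
  is_derive f x df -> is_derive k x dk -> df * k x + f x * dk = l ->
  is_derive (fun r => f r * k r) x l.
Proof.
  intros Df Dk <-. apply (is_derive_mult f k x df dk Df Dk). intros; apply Rmult_comm.
Qed.

Lemma is_derive_inv_sqrt (b : R -> R) t db : 0 < b t -> is_derive b t db ->
  is_derive (fun r => / sqrt (b r)) t (- db / (2 * b t * sqrt (b t))).
Proof.
  intros Hb Db. pose proof (sqrt_lt_R0 _ Hb). auto_derive.
  - repeat split; auto. exists db; auto. lra.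
  - rewrite_Derive. rewrite sqrt_sqrt by lra. field. lra.
Qed.

Definition clamp01 (t : R) : R := Rmax 0 (Rmin 1 t).

Lemma clamp01_id t : 0 <= t <= 1 -> clamp01 t = t.
Proof. intros Ht. unfold clamp01. rewrite Rmin_right, Rmax_right; lra. Qed.

Lemma clamp01_range t : 0 <= clamp01 t <= 1.
Proof. unfold clamp01, Rmax, Rmin. repeat destruct Rle_dec; lra. Qed.

Lemma continuous_clamp01_comp (f : R -> R) :
  (forall t, 0 <= t <= 1 -> continuous f t) -> forall t, continuous (fun r => f (clamp01 r)) t.
Proof.
  intros Hf t. apply (continuous_comp clamp01 f); [|apply Hf, clamp01_range].
  apply filterlim_locally. intros eps. exists eps. intros r Hr.
  change (Rabs (clamp01 r - clamp01 t) < eps). change (Rabs (r - t) < eps) in Hr.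
  revert Hr. unfold clamp01, Rmax, Rmin, Rabs.
  repeat destruct Rle_dec; repeat destruct Rcase_abs; lra.
Qed.

Lemma is_derive_0_const_except (f : R -> R) (l : list R) a b : a <= b ->
  (forall x, a <= x <= b -> continuous f x) ->
  (forall x, a < x < b -> ~ In x l -> is_derive f x 0) -> f a = f b.
Proof.
  revert a b. induction l as [|p l IH]; intros a b Hab Hc Hd.
  - destruct (MVT_gen f a b (fun _ => 0)) as [c [_ Hfc]].
    + rewrite Rmin_left, Rmax_right by lra. intros x Hx. apply Hd; auto.
    + rewrite Rmin_left, Rmax_right by lra. intros x Hx.
      apply continuity_pt_filterlim, Hc; auto.
    + lra.
  - assert (Hdl : forall u v, a <= u -> v <= b -> ~ u < p < v ->
                  forall x, u < x < v -> ~ In x l -> is_derive f x 0).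
    { intros u v Hu Hv Hp x Hx Hl. apply Hd; [lra|]. intros [<-|]; [lra|auto]. }
    destruct (classic (a < p < b)) as [Hp|Hp].
    + transitivity (f p); apply IH; try lra; try (intros; apply Hc; lra);
        apply Hdl; lra.
    + apply IH; auto. apply Hdl; lra.
Qed.

Lemma is_RInt_ext_except (f k : R -> R) (l : list R) a b I : a <= b ->
  (forall x, a < x < b -> ~ In x l -> f x = k x) -> is_RInt k a b I -> is_RInt f a b I.
Proof.
  revert a b I. induction l as [|p l IH]; intros a b I Hab Hfk Hk.
  - apply is_RInt_ext with k; [|exact Hk].
    rewrite Rmin_left, Rmax_right by lra. intros x Hx. symmetry. apply Hfk; auto.
  - assert (Hfl : forall u v, a <= u -> v <= b -> ~ u < p < v ->
                  forall x, u < x < v -> ~ In x l -> f x = k x).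
    { intros u v Hu Hv Hp x Hx Hl. apply Hfk; [lra|]. intros [<-|]; [lra|auto]. }
    destruct (classic (a < p < b)) as [Hp|Hp].
    + assert (Ek : ex_RInt k a b) by (exists I; exact Hk).
      assert (Eap : ex_RInt k a p) by (apply (ex_RInt_Chasles_1 k a p b); auto; lra).
      assert (Epb : ex_RInt k p b) by (apply (ex_RInt_Chasles_2 k a p b); auto; lra).
      rewrite <- (is_RInt_unique k a b I Hk), <- (RInt_Chasles k a p b Eap Epb).
      apply (is_RInt_Chasles (V := R_NormedModule) f a p b);
        apply IH; try lra; try (apply Hfl; lra).
      * exact (RInt_correct k a p Eap).
      * exact (RInt_correct k p b Epb).
    + apply IH; auto. apply Hfl; lra.
Qed.

Lemma continuous_inj_no_interior_max (f : R -> R) u m w :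
  (forall x, continuous f x) ->
  (forall x y, u <= x <= w -> u <= y <= w -> f x = f y -> x = y) ->
  u < m < w -> f u < f m -> f w < f m -> False.
Proof.
  intros Hc Hi Hm Hu Hw.
  set (v := (f m + Rmax (f u) (f w)) / 2).
  assert (Hv : f u < v < f m /\ f w < v) by (unfold v, Rmax; destruct Rle_dec; lra).
  destruct (IVT_gen_consistent f u m v Hc) as [x [Hx Ex]].
  { rewrite Rmin_left, Rmax_right; lra. }
  destruct (IVT_gen_consistent f m w v Hc) as [y [Hy Ey]].
  { rewrite Rmin_right, Rmax_left; lra. }
  rewrite Rmin_left, Rmax_right in Hx, Hy by lra.
  assert (x <> m) by (intros ->; lra).
  assert (x = y) by (apply Hi; lra || congruence).
  lra.
Qed.

Lemma continuous_inj_between (f : R -> R) u m w :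
  (forall x, continuous f x) ->
  (forall x y, u <= x <= w -> u <= y <= w -> f x = f y -> x = y) ->
  u < m < w -> f u < f m < f w \/ f w < f m < f u.
Proof.
  intros Hc Hi Hm.
  assert (f u <> f m) by (intros E; apply Hi in E; lra).
  assert (f w <> f m) by (intros E; apply Hi in E; lra).
  destruct (Rlt_or_le (f u) (f m)), (Rlt_or_le (f w) (f m)); try lra.
  - exfalso. apply (continuous_inj_no_interior_max f u m w); auto.
  - exfalso. apply (continuous_inj_no_interior_max (fun x => - f x) u m w); try lra.
    + intros x. apply (continuous_opp (V := R_NormedModule)), Hc.
    + intros x y Hx Hy E. apply Hi; auto. lra.
Qed.

Lemma continuous_inj_monotone (f : R -> R) a b :
  (forall x, continuous f x) ->
  (forall x y, a < x < b -> a < y < b -> f x = f y -> x = y) ->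
  exists e, (e = 1 \/ e = -1) /\
    forall x y, a < x -> x < y -> y < b -> e * f x < e * f y.
Proof.
  intros Hc Hi.
  assert (Htriple : forall u v w, a < u -> u < v -> v < w -> w < b ->
            (f u < f v <-> f u < f w) /\ (f v < f w <-> f u < f w)).
  { intros u v w Hu Huv Hvw Hw.
    assert (f u <> f w) by (intros E; apply Hi in E; lra).
    destruct (continuous_inj_between f u v w Hc) as [B|B]; try lra.
    intros x y Hx Hy. apply Hi; lra. }
  assert (Hpair : forall x y m M, a < m -> m <= x -> x < y -> y <= M -> M < b ->
            (f x < f y <-> f m < f M)).
  { intros x y m M Hm Hmx Hxy HyM HM.
    assert (E1 : f x < f y <-> f m < f y).
    { destruct (Req_dec m x) as [->|]; [tauto|].
      destruct (Htriple m x y); lra. }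
    rewrite E1. destruct (Req_dec y M) as [->|]; [tauto|].
    destruct (Htriple m y M); lra. }
  destruct (Rlt_or_le a b) as [Hab|Hba].
  2: { exists 1. split; [lra|]. intros; lra. }
  set (x0 := (2 * a + b) / 3). set (y0 := (a + 2 * b) / 3).
  assert (Hxy0 : a < x0 < y0 /\ y0 < b) by (unfold x0, y0; lra).
  assert (Hsame : forall x y, a < x -> x < y -> y < b -> (f x < f y <-> f x0 < f y0)).
  { intros x y Hx Hxy Hy.
    assert (a < Rmin x x0) by (apply Rmin_glb_lt; lra).
    assert (Rmax y y0 < b) by (apply Rmax_lub_lt; lra).
    rewrite (Hpair x y (Rmin x x0) (Rmax y y0)), (Hpair x0 y0 (Rmin x x0) (Rmax y y0));
      auto using Rmin_l, Rmin_r, Rmax_l, Rmax_r; tauto || lra. }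
  destruct (Rlt_or_le (f x0) (f y0)) as [Hlt|Hge].
  - exists 1. split; [lra|]. intros x y Hx Hxy Hy. rewrite !Rmult_1_l. apply Hsame; auto.
  - exists (-1). split; [lra|]. intros x y Hx Hxy Hy.
    assert (f x <> f y) by (intros E; apply Hi in E; lra).
    assert (~ f x < f y) by (rewrite Hsame; lra; auto). lra.
Qed.

Lemma nonneg_of_increasing_primitive (f F : R -> R) a b :
  (forall x, continuous f x) -> (forall x y, F y - F x = RInt f x y) ->
  (forall x y, a < x -> x < y -> y < b -> F x < F y) ->
  forall t, a < t < b -> 0 <= f t.
Proof.
  intros Hc HF Hinc t Ht. apply Rnot_lt_le. intros Hneg.
  assert (Hcopp : forall x, continuous (fun r => - f r) x)
    by (intros x; pose proof (Hc x); continuous_R; auto).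
  destruct (continuous_locally_pos (fun r => - f r) t (Hcopp t) ltac:(lra)) as [eps Heps].
  set (y := t + Rmin eps (b - t) / 2).
  assert (Hy : t < y < b /\ y - t < eps).
  { pose proof (cond_pos eps). pose proof (Rmin_l eps (b - t)). pose proof (Rmin_r eps (b - t)).
    assert (0 < Rmin eps (b - t)) by (apply Rmin_pos; lra). unfold y; lra. }
  assert (Hint : 0 < RInt (fun r => - f r) t y).
  { apply RInt_gt_0; [lra | | intros; apply Hcopp].
    intros x Hx. apply Heps. change (Rabs (x - t) < eps). rewrite Rabs_right; lra. }
  assert (Hex : ex_RInt f t y)
    by (apply (ex_RInt_continuous (V := R_CompleteNormedModule)); intros; apply Hc).
  replace (RInt (fun r => - f r) t y) with (- RInt f t y) in Hint
    by exact (eq_sym (RInt_opp f t y Hex)).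
  rewrite <- HF in Hint.
  specialize (Hinc t y (proj1 Ht) (proj1 (proj1 Hy)) (proj2 (proj1 Hy))). lra.
Qed.

Lemma first_return_2PI (phi : R -> R) :
  (forall x, continuous phi x) -> phi 0 = 0 ->
  (forall u v, 0 <= u -> u <= v -> v <= 1 -> phi u <= phi v) ->
  cos (phi 1) = 1 ->
  (forall t, 0 < t < 1 -> cos (phi t) = 1 -> sin (phi t) = 0 -> False) ->
  phi 1 = 2 * PI.
Proof.
  intros Hc H0 Hmono Hcos1 Hnoreturn. pose proof PI_RGT_0.
  assert (0 <= phi 1) by (rewrite <- H0; apply Hmono; lra).
  destruct (Rlt_or_le (phi 1) (2 * PI)) as [Hlt|Hge].
  - exfalso. destruct (Req_dec (phi 1) 0) as [Hz|Hnz].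
    + assert (Hhalf : phi (1/2) = 0)
        by (pose proof (Hmono 0 (1/2)); pose proof (Hmono (1/2) 1); lra).
      apply (Hnoreturn (1/2)); [lra | rewrite Hhalf; apply cos_0 | rewrite Hhalf; apply sin_0].
    + assert (0 < sin (phi 1 / 2)) by (apply sin_gt_0; lra).
      replace (phi 1) with (2 * (phi 1 / 2)) in Hcos1 by field.
      rewrite cos_2a_sin in Hcos1. nra.
  - destruct (Req_dec (phi 1) (2 * PI)) as [|Hne]; auto. exfalso.
    destruct (IVT_gen_consistent phi 0 1 (2 * PI) Hc) as [t [Ht Et]].
    { rewrite H0, Rmin_left, Rmax_right; lra. }
    rewrite Rmin_left, Rmax_right in Ht by lra.
    assert (t <> 0) by (intros ->; lra). assert (t <> 1) by (intros ->; lra).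
    apply (Hnoreturn t); [lra | rewrite Et; apply cos_2PI | rewrite Et; apply sin_2PI].
Qed.

Lemma rotation_of_angular_velocity (X Y th w : R -> R) (l : list R) a b :
  a <= b -> th a = 0 ->
  (forall t, a <= t <= b -> continuous X t /\ continuous Y t /\ continuous th t) ->
  (forall t, a < t < b -> ~ In t l ->
     is_derive X t (- Y t * w t) /\ is_derive Y t (X t * w t) /\ is_derive th t (w t)) ->
  X b = X a * cos (th b) - Y a * sin (th b) /\ Y b = X a * sin (th b) + Y a * cos (th b).
Proof.
  intros Hab Hth0 Hc Hd.
  assert (HF : X a = X b * cos (th b) + Y b * sin (th b)).
  { transitivity (X a * cos (th a) + Y a * sin (th a)).
    { rewrite Hth0, cos_0, sin_0. ring. }
    apply (is_derive_0_const_except (fun t => X t * cos (th t) + Y t * sin (th t)) l a b Hab).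
    - intros t Ht. destruct (Hc t Ht) as (HX & HY & Hth). continuous_R; auto.
    - intros t Ht Hl. destruct (Hd t Ht Hl) as (DX & DY & Dth). auto_derive.
      + repeat split; eexists; eauto.
      + rewrite_Derive. ring. }
  assert (HG : Y a = Y b * cos (th b) - X b * sin (th b)).
  { transitivity (Y a * cos (th a) - X a * sin (th a)).
    { rewrite Hth0, cos_0, sin_0. ring. }
    apply (is_derive_0_const_except (fun t => Y t * cos (th t) - X t * sin (th t)) l a b Hab).
    - intros t Ht. destruct (Hc t Ht) as (HX & HY & Hth). continuous_R; auto.
    - intros t Ht Hl. destruct (Hd t Ht Hl) as (DX & DY & Dth). auto_derive.
      + repeat split; eexists; eauto.
      + rewrite_Derive. ring. }
  pose proof (sin2_cos2 (th b)) as Hpyth. unfold Rsqr in Hpyth.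
  set (c := cos (th b)) in *. set (sn := sin (th b)) in *.
  rewrite HF, HG. split.
  - transitivity (X b * (sn * sn + c * c)); [rewrite Hpyth|]; ring.
  - transitivity (Y b * (sn * sn + c * c)); [rewrite Hpyth|]; ring.
Qed.

Lemma inj_preimage_of_pair_finite {A B : Type} (P : A -> Prop) (f : A -> B) (u v : B) :
  (forall s t, P s -> P t -> f s = f t -> s = t) ->
  (forall t, P t -> f t = u \/ f t = v) -> exists l, forall t, P t -> In t l.
Proof.
  intros Hinj Huv.
  assert (Hfiber : forall w, exists l, forall t, P t -> f t = w -> In t l).
  { intros w. destruct (classic (exists s, P s /\ f s = w)) as [[s [Ps Es]]|Hnone].
    - exists [s]. intros t Pt Et. left. apply Hinj; congruence.
    - exists []. intros t Pt Et. apply Hnone. eauto. }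
  destruct (Hfiber u) as [lu Hu], (Hfiber v) as [lv Hv].
  exists (lu ++ lv). intros t Pt. apply in_or_app.
  destruct (Huv t Pt); [left | right]; auto.
Qed.

Lemma sign_choice x : x <> 0 -> exists s, (s = 1 \/ s = -1) /\ 0 < s * x.
Proof.
  intros Hx. destruct (Rlt_dec 0 x).
  - exists 1. split; lra.
  - exists (-1). split; lra.
Qed.

Lemma Rabs_sign_mult e w : e = 1 \/ e = -1 -> 0 <= e * w -> Rabs w = e * w.
Proof.
  intros [-> | ->] Hw; [rewrite Rabs_right | rewrite Rabs_left1]; lra.
Qed.

Lemma cos_sign_mult e x : e = 1 \/ e = -1 -> cos (e * x) = cos x.
Proof.
  intros [-> | ->]; [rewrite Rmult_1_l | replace (-1 * x) with (- x) by ring; apply cos_neg]; auto.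
Qed.

Lemma sin_sign_mult e x : e = 1 \/ e = -1 -> sin (e * x) = e * sin x.
Proof.
  intros [-> | ->]; [rewrite !Rmult_1_l | replace (-1 * x) with (- x) by ring; rewrite sin_neg];
    auto; ring.
Qed.

(** * The parameter h *)

Lemma hF_sq g : -2 < g < 2 -> hF g * hF g = 1 - g * g / 4.
Proof. intros Hg. unfold hF. rewrite sqrt_sqrt; [field | nra]. Qed.

Lemma hF_pos g : -2 < g < 2 -> 0 < hF g.
Proof. intros Hg. unfold hF. apply sqrt_lt_R0. nra. Qed.

Lemma hF_le_1 g : -2 < g < 2 -> hF g <= 1.
Proof. intros Hg. pose proof (hF_pos g Hg). pose proof (hF_sq g Hg). nra. Qed.

Lemma hF_eq_1 g : -2 < g < 2 -> hF g = 1 <-> g = 0.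
Proof.
  intros Hg. pose proof (hF_sq g Hg). split.
  - intros E. rewrite E in H. nra.
  - intros ->. unfold hF. replace (1 - 0 ^ 2 / 4) with 1 by field. apply sqrt_1.
Qed.

(* [u = 2 h / (2 + g)] parametrises the circle (g/2)^2 + h^2 = 1 rationally, so identities
   that need h^2 = 1 - g^2/4 become plain field identities in u. *)
Lemma hF_rational g : -2 < g < 2 ->
  exists u, 0 < u /\ g = 2 * (1 - u * u) / (1 + u * u) /\ hF g = 2 * u / (1 + u * u).
Proof.
  intros Hg. pose proof (hF_pos g Hg). pose proof (hF_sq g Hg).
  exists (2 * hF g / (2 + g)). split; [apply Rdiv_lt_0_compat; lra|].
  split; field_simplify_eq; try lra; try nra.
Qed.

Lemma length_ge_2PI g : -2 < g < 2 -> 2 * PI / hF g >= 2 * PI.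
Proof.
  intros Hg. pose proof (hF_pos g Hg). pose proof (hF_le_1 g Hg). pose proof PI_RGT_0.
  apply Rle_ge. apply Rmult_le_reg_r with (hF g); auto.
  replace (2 * PI / hF g * hF g) with (2 * PI) by (field; lra). nra.
Qed.

Lemma length_eq_2PI_iff g : -2 < g < 2 -> (2 * PI / hF g = 2 * PI <-> g = 0).
Proof.
  intros Hg. pose proof (hF_pos g Hg). pose proof PI_RGT_0. rewrite <- (hF_eq_1 g Hg).
  split; intros E.
  - apply (f_equal (fun z => z * hF g / (2 * PI))) in E. field_simplify in E; lra.
  - rewrite E. field.
Qed.

Lemma length_large_near_endpoints M : exists d, 0 < d /\
  forall g, 2 - d < g < 2 \/ -2 < g < -2 + d -> M < 2 * PI / hF g.
Proof.
  pose proof PI_RGT_0. set (a := 2 * PI / Rmax M 1).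
  assert (HM : 0 < Rmax M 1) by (apply Rlt_le_trans with 1; [lra | apply Rmax_r]).
  assert (Ha : 0 < a) by (apply Rdiv_lt_0_compat; lra).
  exists (Rmin 1 (a * a)). split; [apply Rmin_pos; nra|]. intros g Hnear.
  pose proof (Rmin_l 1 (a * a)). pose proof (Rmin_r 1 (a * a)).
  assert (Hg : -2 < g < 2) by lra. pose proof (hF_pos g Hg).
  assert (Hh : hF g < a).
  { unfold hF. rewrite <- (sqrt_square a) by lra. apply sqrt_lt_1_alt. nra. }
  apply Rle_lt_trans with (Rmax M 1); [apply Rmax_l|].
  replace (Rmax M 1) with (2 * PI / a) by (unfold a; field; lra).
  unfold Rdiv. apply Rmult_lt_compat_l; [lra|]. apply Rinv_lt_contravar; nra.
Qed.

Lemma length_unbounded_left :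
  filterlim (fun g => 2 * PI / hF g) (at_left 2) (Rbar_locally p_infty).
Proof.
  intros P [M HM]. destruct (length_large_near_endpoints M) as [d [Hd Hnear]].
  exists (mkposreal d Hd). intros g Hball Hlt. apply HM, Hnear. left.
  change (Rabs (g - 2) < d) in Hball. apply Rabs_def2 in Hball. lra.
Qed.

Lemma length_unbounded_right :
  filterlim (fun g => 2 * PI / hF g) (at_right (-2)) (Rbar_locally p_infty).
Proof.
  intros P [M HM]. destruct (length_large_near_endpoints M) as [d [Hd Hnear]].
  exists (mkposreal d Hd). intros g Hball Hgt. apply HM, Hnear. right.
  change (Rabs (g - -2) < d) in Hball. apply Rabs_def2 in Hball. lra.
Qed.

(** * The Finsleroid off the axis *)

Lemma KF_off_origin g x y : x <> 0 \/ y <> 0 -> KF g x y = sqrt (BF g x y) * JF g x y.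
Proof. intros Hxy. unfold KF. destruct (Req_EM_T x 0), (Req_EM_T y 0); tauto. Qed.

(* B and J^2 = exp (G Phi) on the half plane 0 < s x (s = 1 or -1), where |x| = s x. *)
Definition B_half (g s x y : R) : R := y * y + g * s * x * y + x * x.
Definition J2_half (g s x y : R) : R :=
  exp (GF g * atan ((y + / 2 * g * (s * x)) / (hF g * (s * x)))).

Section HalfPlane.
Variables g s : R.
Hypothesis Hg : -2 < g < 2.
Hypothesis Hs : s = 1 \/ s = -1.

Lemma qF_half x : 0 < s * x -> qF x = s * x.
Proof.
  intros Hx. unfold qF. destruct Hs as [-> | ->]; [rewrite Rabs_right | rewrite Rabs_left]; lra.
Qed.

Lemma B_half_sum_sq x y :
  B_half g s x y =
  (hF g * (s * x)) * (hF g * (s * x)) + (y + / 2 * g * (s * x)) * (y + / 2 * g * (s * x)).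
Proof.
  replace ((hF g * (s * x)) * (hF g * (s * x))) with (hF g * hF g * (x * x))
    by (destruct Hs as [-> | ->]; ring).
  rewrite hF_sq by auto. unfold B_half. destruct Hs as [-> | ->]; field.
Qed.

Lemma B_half_pos x y : 0 < s * x -> 0 < B_half g s x y.
Proof.
  intros Hx. rewrite B_half_sum_sq. pose proof (hF_pos g Hg).
  assert (0 < hF g * (s * x)) by (apply Rmult_lt_0_compat; auto).
  pose proof (Rle_0_sqr (y + / 2 * g * (s * x))). unfold Rsqr in *. nra.
Qed.

Lemma locally_half_plane x : 0 < s * x -> locally x (fun r => 0 < s * r).
Proof.
  intros Hx. apply (continuous_locally_pos (fun r => s * r)); auto.
  apply (continuous_mult (K := R_AbsRing)); [apply continuous_const | apply continuous_id].
Qed.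

Lemma BF_half x y : 0 < s * x -> BF g x y = B_half g s x y.
Proof.
  intros Hx. unfold BF, qF, B_half.
  destruct Hs as [-> | ->]; [rewrite Rabs_right | rewrite Rabs_left]; lra || ring.
Qed.

Lemma K2F_half x y : 0 < s * x -> K2F g x y = B_half g s x y * J2_half g s x y.
Proof.
  intros Hx. pose proof (B_half_pos x y Hx).
  unfold K2F. rewrite KF_off_origin by (left; intros ->; lra).
  rewrite BF_half by auto.
  unfold JF, PhiF, AF, J2_half. rewrite qF_half by auto.
  destruct (Rlt_dec 0 (s * x)); [|lra].
  rewrite Rpow_mult_distr, pow2_sqrt by lra. f_equal.
  simpl. rewrite Rmult_1_r, <- exp_plus. f_equal. field.
Qed.

(* Derivatives of the angle simplify once B is written as a sum of squares. *)
Ltac half_plane_field x y :=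
  rewrite !B_half_sum_sq; unfold J2_half, GF, Rdiv;
  assert (0 < hF g * (s * x)) by (apply Rmult_lt_0_compat; [apply hF_pos|]; auto);
  pose proof (Rle_0_sqr (y + / 2 * g * (s * x))); unfold Rsqr in *;
  destruct Hs as [-> | ->]; field; repeat split; nra.

Lemma is_derive_J2_half_x x y : 0 < s * x ->
  is_derive (fun r => J2_half g s r y) x (- g * s * y * J2_half g s x y / B_half g s x y).
Proof.
  intros Hx. pose proof (hF_pos g Hg).
  unfold J2_half, GF. auto_derive; [nra|]. half_plane_field x y.
Qed.

Lemma is_derive_J2_half_y x y : 0 < s * x ->
  is_derive (fun r => J2_half g s x r) y (g * s * x * J2_half g s x y / B_half g s x y).
Proof.
  intros Hx. pose proof (hF_pos g Hg).
  unfold J2_half, GF. auto_derive; [nra|]. half_plane_field x y.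
Qed.

Lemma partial1_K2F_half x y : 0 < s * x -> partial 1 (K2F g) x y = 2 * x * J2_half g s x y.
Proof.
  intros Hx. simpl. apply is_derive_unique.
  apply is_derive_ext_loc with (fun r => B_half g s r y * J2_half g s r y).
  { apply (filter_imp (fun r => 0 < s * r)); [|apply locally_half_plane; auto].
    intros r Hr. symmetry. apply K2F_half, Hr. }
  apply is_derive_Rmult with (g * s * y + 2 * x) (- g * s * y * J2_half g s x y / B_half g s x y).
  - unfold B_half. auto_derive; auto. ring.
  - apply is_derive_J2_half_x; auto.
  - field. apply Rgt_not_eq, B_half_pos; auto.
Qed.

Lemma partial2_K2F_half x y : 0 < s * x ->
  partial 2 (K2F g) x y = 2 * (y + g * s * x) * J2_half g s x y.
Proof.
  intros Hx. simpl. apply is_derive_unique.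
  apply is_derive_ext with (fun r => B_half g s x r * J2_half g s x r).
  { intros r. symmetry. apply K2F_half, Hx. }
  apply is_derive_Rmult with (2 * y + g * s * x) (g * s * x * J2_half g s x y / B_half g s x y).
  - unfold B_half. auto_derive; auto. ring.
  - apply is_derive_J2_half_y; auto.
  - field. apply Rgt_not_eq, B_half_pos; auto.
Qed.

Lemma gmet11_half x y : 0 < s * x ->
  gmet g 1 1 x y = J2_half g s x y * (1 - g * s * x * y / B_half g s x y).
Proof.
  intros Hx. pose proof (B_half_pos x y Hx). unfold gmet.
  replace (partial 1 (partial 1 (K2F g)) x y)
    with (2 * J2_half g s x y + 2 * x * (- g * s * y * J2_half g s x y / B_half g s x y)).
  { field. lra. }
  symmetry. apply is_derive_unique.
  apply is_derive_ext_loc with (fun r => 2 * r * J2_half g s r y).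
  { apply (filter_imp (fun r => 0 < s * r)); [|apply locally_half_plane; auto].
    intros r Hr. symmetry. apply partial1_K2F_half, Hr. }
  apply is_derive_Rmult with 2 (- g * s * y * J2_half g s x y / B_half g s x y).
  - auto_derive; auto. ring.
  - apply is_derive_J2_half_x; auto.
  - ring.
Qed.

Lemma gmet12_half x y : 0 < s * x ->
  gmet g 1 2 x y = J2_half g s x y * (g * s - (y + g * s * x) * g * s * y / B_half g s x y).
Proof.
  intros Hx. pose proof (B_half_pos x y Hx). unfold gmet.
  replace (partial 1 (partial 2 (K2F g)) x y)
    with (2 * g * s * J2_half g s x y
          + 2 * (y + g * s * x) * (- g * s * y * J2_half g s x y / B_half g s x y)).
  { field. lra. }
  symmetry. apply is_derive_unique.
  apply is_derive_ext_loc with (fun r => 2 * (y + g * s * r) * J2_half g s r y).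
  { apply (filter_imp (fun r => 0 < s * r)); [|apply locally_half_plane; auto].
    intros r Hr. symmetry. apply partial2_K2F_half, Hr. }
  apply is_derive_Rmult with (2 * g * s) (- g * s * y * J2_half g s x y / B_half g s x y).
  - auto_derive; auto. ring.
  - apply is_derive_J2_half_x; auto.
  - ring.
Qed.

Lemma gmet21_half x y : 0 < s * x ->
  gmet g 2 1 x y = J2_half g s x y * (x * g * s * x / B_half g s x y).
Proof.
  intros Hx. pose proof (B_half_pos x y Hx). unfold gmet.
  replace (partial 2 (partial 1 (K2F g)) x y)
    with (2 * x * (g * s * x * J2_half g s x y / B_half g s x y)).
  { field. lra. }
  symmetry. apply is_derive_unique.
  apply is_derive_ext with (fun r => 2 * x * J2_half g s x r).
  { intros r. symmetry. apply partial1_K2F_half, Hx. }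
  apply is_derive_Rmult with 0 (g * s * x * J2_half g s x y / B_half g s x y).
  - auto_derive; auto.
  - apply is_derive_J2_half_y; auto.
  - ring.
Qed.

Lemma gmet22_half x y : 0 < s * x ->
  gmet g 2 2 x y = J2_half g s x y * (1 + (y + g * s * x) * g * s * x / B_half g s x y).
Proof.
  intros Hx. pose proof (B_half_pos x y Hx). unfold gmet.
  replace (partial 2 (partial 2 (K2F g)) x y)
    with (2 * J2_half g s x y
          + 2 * (y + g * s * x) * (g * s * x * J2_half g s x y / B_half g s x y)).
  { field. lra. }
  symmetry. apply is_derive_unique.
  apply is_derive_ext with (fun r => 2 * (r + g * s * x) * J2_half g s x r).
  { intros r. symmetry. apply partial2_K2F_half, Hx. }
  apply is_derive_Rmult with 2 (g * s * x * J2_half g s x y / B_half g s x y).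
  - auto_derive; auto. ring.
  - apply is_derive_J2_half_y; auto.
  - ring.
Qed.

Lemma gquad_indicatrix_half x y v1 v2 : 0 < s * x -> K2F g x y = 1 ->
  x * v1 + (y + g * s * x) * v2 = 0 ->
  gquad g x y v1 v2 = ((x * v2 - y * v1) / BF g x y) ^ 2.
Proof.
  intros Hx HK Htangent. pose proof (B_half_pos x y Hx).
  rewrite K2F_half in HK by auto. rewrite BF_half by auto.
  unfold gquad. rewrite gmet11_half, gmet12_half, gmet21_half, gmet22_half by auto.
  replace (J2_half g s x y) with (/ B_half g s x y)
    by (apply (Rmult_eq_reg_l (B_half g s x y)); [rewrite HK, Rinv_r | ]; lra).
  transitivity (((x * v2 - y * v1) / B_half g s x y) ^ 2
                + ((x * v1 + (y + g * s * x) * v2) / B_half g s x y) ^ 2).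
  - unfold B_half in *. destruct Hs as [-> | ->]; field; lra.
  - rewrite Htangent. field. lra.
Qed.

Lemma is_derive_circle_half (c1 c2 : R -> R) (t d1 d2 : R) :
  0 < s * c1 t -> is_derive c1 t d1 -> is_derive c2 t d2 ->
  let B r := B_half g s (c1 r) (c2 r) in
  let A r := c2 r + / 2 * g * (s * c1 r) in
  let om := hF g * (c1 t * d2 - c2 t * d1) / B t in
  is_derive (fun r => hF g * c1 r / sqrt (B r)) t (- (A t / sqrt (B t)) * om) /\
  is_derive (fun r => A r / sqrt (B r)) t (hF g * c1 t / sqrt (B t) * om).
Proof.
  intros Hx D1 D2 B A om. pose proof (hF_pos g Hg).
  pose proof (B_half_pos (c1 t) (c2 t) Hx) as HB. fold (B t) in HB.
  pose proof (sqrt_lt_R0 _ HB).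
  assert (EB : forall r, B r = (hF g * (s * c1 r)) * (hF g * (s * c1 r)) + A r * A r)
    by (intros r; unfold B; rewrite B_half_sum_sq; auto).
  set (dB := 2 * (hF g * (s * c1 t)) * (hF g * (s * d1)) + 2 * A t * (d2 + / 2 * g * (s * d1))).
  assert (DB : is_derive B t dB).
  { apply is_derive_ext with (fun r => (hF g * (s * c1 r)) * (hF g * (s * c1 r)) + A r * A r).
    { intros r. symmetry. apply EB. }
    unfold dB, A. auto_derive; [repeat split; eexists; eauto | rewrite_Derive; ring]. }
  pose proof (is_derive_inv_sqrt B t dB HB DB) as DI.
  unfold om. split.
  - apply is_derive_Rmult with (hF g * d1) (- dB / (2 * B t * sqrt (B t))); auto.
    + auto_derive; [eexists; eauto | rewrite_Derive; ring].
    + rewrite EB in H0, HB |- *. unfold dB, A in *. field. split; [nra | lra].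
  - apply is_derive_Rmult with (d2 + / 2 * g * (s * d1)) (- dB / (2 * B t * sqrt (B t))); auto.
    + unfold A. auto_derive; [repeat split; eexists; eauto | rewrite_Derive; ring].
    + rewrite EB in H0, HB |- *. unfold dB, A in *. destruct Hs as [-> | ->]; field; split; nra.
Qed.

Lemma is_derive_K2_half_curve (c1 c2 : R -> R) (t d1 d2 : R) :
  0 < s * c1 t -> is_derive c1 t d1 -> is_derive c2 t d2 ->
  is_derive (fun r => B_half g s (c1 r) (c2 r) * J2_half g s (c1 r) (c2 r)) t
    (J2_half g s (c1 t) (c2 t) * (2 * c1 t * d1 + 2 * (c2 t + g * s * c1 t) * d2)).
Proof.
  intros Hx D1 D2. pose proof (hF_pos g Hg).
  assert (0 < hF g * (s * c1 t)) by (apply Rmult_lt_0_compat; auto).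
  pose proof (Rle_0_sqr (c2 t + / 2 * g * (s * c1 t))). unfold Rsqr in *.
  apply is_derive_ext with (fun r =>
    ((hF g * (s * c1 r)) * (hF g * (s * c1 r))
     + (c2 r + / 2 * g * (s * c1 r)) * (c2 r + / 2 * g * (s * c1 r))) * J2_half g s (c1 r) (c2 r)).
  { intros r. rewrite B_half_sum_sq; auto. }
  unfold J2_half, GF. auto_derive.
  { repeat split; try (eexists; eauto). nra. }
  destruct (hF_rational g Hg) as (u & Hu & Eg & Eh). rewrite_Derive. unfold Rdiv.
  destruct Hs as [-> | ->]; field_simplify_eq; try (repeat split; nra);
    rewrite Eh, Eg; field; nra.
Qed.

End HalfPlane.

(** * The indicatrix seen on the unit circle *)

Definition circle_X (g x y : R) : R := hF g * x / sqrt (BF g x y).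
Definition circle_Y (g x y : R) : R := AF g x y / sqrt (BF g x y).

Definition circle_angle (X Y : R) : R :=
  if Rlt_dec 0 (Rabs X) then atan (Y / Rabs X)
  else if Rlt_dec 0 Y then PI / 2 else - (PI / 2).

Section Circle.
Variable g : R.
Hypothesis Hg : -2 < g < 2.

Lemma BF_sum_sq x y : BF g x y = (hF g * x) * (hF g * x) + AF g x y * AF g x y.
Proof.
  replace ((hF g * x) * (hF g * x)) with (hF g * hF g * (qF x * qF x))
    by (unfold qF; rewrite <- Rabs_mult, Rabs_right by nra; ring).
  rewrite hF_sq by auto. unfold BF, AF. field.
Qed.

Lemma BF_pos x y : x <> 0 \/ y <> 0 -> 0 < BF g x y.
Proof.
  intros Hxy. rewrite BF_sum_sq. pose proof (hF_pos g Hg).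
  destruct (Req_dec x 0) as [->|Hx].
  - unfold AF, qF. rewrite Rabs_R0. destruct Hxy as [|Hy]; [lra|].
    apply Rlt_le_trans with (y * y); [apply Rsqr_pos_lt, Hy | right; ring].
  - assert (0 < hF g * x * (hF g * x)) by (apply Rsqr_pos_lt; nra).
    pose proof (Rle_0_sqr (AF g x y)). unfold Rsqr in *. lra.
Qed.

Lemma circle_XY_unit x y : x <> 0 \/ y <> 0 ->
  circle_X g x y * circle_X g x y + circle_Y g x y * circle_Y g x y = 1.
Proof.
  intros Hxy. pose proof (BF_pos x y Hxy) as HB. pose proof (sqrt_sqrt _ (Rlt_le _ _ HB)) as Hq.
  pose proof (sqrt_lt_R0 _ HB). unfold circle_X, circle_Y. set (q := sqrt (BF g x y)) in *.
  rewrite BF_sum_sq in Hq.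
  transitivity ((hF g * x * (hF g * x) + AF g x y * AF g x y) / (q * q)); [|rewrite Hq]; field; nra.
Qed.

Lemma PhiF_circle_angle x y : x <> 0 \/ y <> 0 ->
  PhiF g x y = circle_angle (circle_X g x y) (circle_Y g x y).
Proof.
  intros Hxy. pose proof (BF_pos x y Hxy) as HB. pose proof (sqrt_lt_R0 _ HB).
  pose proof (hF_pos g Hg).
  assert (Habs : Rabs (circle_X g x y) = hF g * qF x / sqrt (BF g x y)).
  { unfold circle_X, qF, Rdiv.
    rewrite !Rabs_mult, Rabs_inv, (Rabs_right (hF g)), (Rabs_right (sqrt _)); lra. }
  unfold PhiF, circle_angle. rewrite Habs.
  destruct (Rlt_dec 0 (qF x)) as [Hq|Hq].
  - destruct (Rlt_dec 0 (hF g * qF x / sqrt (BF g x y))) as [_|Hn].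
    + f_equal. unfold circle_Y. field. lra.
    + exfalso. apply Hn. apply Rdiv_lt_0_compat; nra.
  - assert (Hx : x = 0).
    { destruct (Req_dec x 0) as [|Hx]; auto. apply Rabs_pos_lt in Hx. unfold qF in Hq. lra. }
    subst x. unfold qF. rewrite Rabs_R0, Rmult_0_r, Rdiv_0_l.
    destruct (Rlt_dec 0 0) as [|_]; [lra|].
    assert (Hy : circle_Y g 0 y = y / sqrt (BF g 0 y)).
    { unfold circle_Y, AF, qF. rewrite Rabs_R0. f_equal. ring. }
    destruct (Rlt_dec 0 y), (Rlt_dec 0 (circle_Y g 0 y)); auto; exfalso; rewrite Hy in *.
    + apply n. apply Rdiv_lt_0_compat; lra.
    + apply n. replace y with (y / sqrt (BF g 0 y) * sqrt (BF g 0 y)) by (field; lra).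
      apply Rmult_lt_0_compat; lra.
Qed.

Lemma indicatrix_off_origin x y : KF g x y = 1 -> x <> 0 \/ y <> 0.
Proof.
  intros HK. destruct (Req_dec x 0) as [->|]; auto. destruct (Req_dec y 0) as [->|]; auto.
  unfold KF in HK. destruct (Req_EM_T 0 0); lra.
Qed.

Lemma indicatrix_inj_circle x y x' y' : KF g x y = 1 -> KF g x' y' = 1 ->
  circle_X g x y = circle_X g x' y' -> circle_Y g x y = circle_Y g x' y' -> x = x' /\ y = y'.
Proof.
  intros HK HK' HX HY.
  pose proof (indicatrix_off_origin x y HK) as N.
  pose proof (indicatrix_off_origin x' y' HK') as N'.
  pose proof (sqrt_lt_R0 _ (BF_pos x y N)). pose proof (sqrt_lt_R0 _ (BF_pos x' y' N')).
  pose proof (hF_pos g Hg).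
  rewrite KF_off_origin in HK, HK' by auto. unfold JF in HK, HK'.
  rewrite PhiF_circle_angle in HK, HK' by auto. rewrite HX, HY in HK.
  assert (Hq : sqrt (BF g x y) = sqrt (BF g x' y')).
  { pose proof (exp_pos (/ 2 * GF g * circle_angle (circle_X g x' y') (circle_Y g x' y'))).
    apply Rmult_eq_reg_r
      with (exp (/ 2 * GF g * circle_angle (circle_X g x' y') (circle_Y g x' y'))); lra. }
  unfold circle_X, circle_Y in HX, HY. rewrite Hq in HX, HY.
  assert (Hx : x = x').
  { apply Rmult_eq_reg_l with (hF g / sqrt (BF g x' y'));
      [|apply Rgt_not_eq, Rdiv_lt_0_compat; lra].
    unfold Rdiv in *. lra. }
  split; auto. subst x'.
  assert (HA : AF g x y = AF g x y').
  { apply Rmult_eq_reg_r with (/ sqrt (BF g x y')); auto.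
    apply Rgt_not_eq, Rinv_0_lt_compat; lra. }
  unfold AF in HA. lra.
Qed.

End Circle.

(** * Length of a parametrised indicatrix *)

Section IndicatrixLoop.
Variables (g : R) (c1 c2 : R -> R).
Hypothesis Hg : -2 < g < 2.
Hypothesis Hsmooth : forall t, 0 <= t <= 1 ->
  ex_derive c1 t /\ ex_derive c2 t /\ continuous (Derive c1) t /\ continuous (Derive c2) t.
Hypothesis Hon : forall t, 0 <= t <= 1 -> KF g (c1 t) (c2 t) = 1.
Hypothesis Hclosed1 : c1 0 = c1 1.
Hypothesis Hclosed2 : c2 0 = c2 1.
Hypothesis Hsimple :
  forall s t, 0 <= s < 1 -> 0 <= t < 1 -> c1 s = c1 t -> c2 s = c2 t -> s = t.

Definition loop_X (t : R) : R := circle_X g (c1 t) (c2 t).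
Definition loop_Y (t : R) : R := circle_Y g (c1 t) (c2 t).
Definition omega (t : R) : R :=
  hF g * (c1 t * Derive c2 t - c2 t * Derive c1 t) / BF g (c1 t) (c2 t).
(* A continuous lift of the angle of (loop_X, loop_Y); omega is extended beyond [0, 1] by
   clamping, which makes theta differentiable everywhere. *)
Definition theta (t : R) : R := RInt (fun r => omega (clamp01 r)) 0 t.

Lemma loop_off_origin t : 0 <= t <= 1 -> c1 t <> 0 \/ c2 t <> 0.
Proof. intros Ht. apply (indicatrix_off_origin g), Hon, Ht. Qed.

Lemma loop_BF_pos t : 0 <= t <= 1 -> 0 < BF g (c1 t) (c2 t).
Proof. intros Ht. apply BF_pos, loop_off_origin; auto. Qed.

Lemma continuous_loop t : 0 <= t <= 1 -> continuous c1 t /\ continuous c2 t.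
Proof.
  intros Ht. destruct (Hsmooth t Ht) as (D1 & D2 & _).
  split; [exact (ex_derive_continuous c1 t D1) | exact (ex_derive_continuous c2 t D2)].
Qed.

Lemma continuous_loop_BF t : 0 <= t <= 1 -> continuous (fun r => BF g (c1 r) (c2 r)) t.
Proof.
  intros Ht. destruct (continuous_loop t Ht).
  apply continuous_ext
    with (fun r => (hF g * c1 r) * (hF g * c1 r) + AF g (c1 r) (c2 r) * AF g (c1 r) (c2 r)).
  { intros r. symmetry. apply BF_sum_sq, Hg. }
  unfold AF, qF. continuous_R; auto.
Qed.

Lemma continuous_omega t : 0 <= t <= 1 -> continuous omega t.
Proof.
  intros Ht. destruct (Hsmooth t Ht) as (_ & _ & C1 & C2). destruct (continuous_loop t Ht).
  unfold omega.
  pose proof (continuous_loop_BF t Ht). pose proof (loop_BF_pos t Ht).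
  continuous_R; auto. lra.
Qed.

Lemma continuous_loop_X t : 0 <= t <= 1 -> continuous loop_X t.
Proof.
  intros Ht. destruct (continuous_loop t Ht). unfold loop_X, circle_X.
  pose proof (continuous_loop_BF t Ht). pose proof (sqrt_lt_R0 _ (loop_BF_pos t Ht)).
  continuous_R; auto. lra.
Qed.

Lemma continuous_loop_Y t : 0 <= t <= 1 -> continuous loop_Y t.
Proof.
  intros Ht. destruct (continuous_loop t Ht). unfold loop_Y, circle_Y, AF, qF.
  pose proof (continuous_loop_BF t Ht). pose proof (sqrt_lt_R0 _ (loop_BF_pos t Ht)).
  continuous_R; auto. lra.
Qed.

Lemma locally_loop_half_plane t s : 0 <= t <= 1 -> 0 < s * c1 t ->
  locally t (fun r => 0 < s * c1 r).
Proof.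
  intros Ht Hsx. apply (continuous_locally_pos (fun r => s * c1 r)); auto.
  destruct (continuous_loop t Ht). continuous_R. auto.
Qed.

Lemma is_derive_loop_circle t : 0 < t < 1 -> c1 t <> 0 ->
  is_derive loop_X t (- loop_Y t * omega t) /\ is_derive loop_Y t (loop_X t * omega t).
Proof.
  intros Ht Hc. destruct (sign_choice _ Hc) as (s & Hs & Hsx).
  destruct (Hsmooth t ltac:(lra)) as (D1 & D2 & _).
  pose proof (is_derive_circle_half g s Hg Hs c1 c2 t (Derive c1 t) (Derive c2 t) Hsx
    (Derive_correct _ _ D1) (Derive_correct _ _ D2)) as D. cbv zeta in D.
  assert (Hloc := locally_loop_half_plane t s ltac:(lra) Hsx).
  assert (EB : forall r, 0 < s * c1 r -> BF g (c1 r) (c2 r) = B_half g s (c1 r) (c2 r))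
    by (intros r Hr; apply BF_half; auto).
  assert (EA : forall r, 0 < s * c1 r -> AF g (c1 r) (c2 r) = c2 r + / 2 * g * (s * c1 r))
    by (intros r Hr; unfold AF; rewrite (qF_half s Hs (c1 r) Hr); auto).
  unfold loop_X, loop_Y, circle_X, circle_Y, omega. rewrite EB, EA by auto.
  destruct D as [DX DY]. split.
  - apply is_derive_ext_loc with (fun r => hF g * c1 r / sqrt (B_half g s (c1 r) (c2 r))); auto.
    apply (filter_imp (fun r => 0 < s * c1 r)); auto. intros r Hr. rewrite EB; auto.
  - apply is_derive_ext_loc
      with (fun r => (c2 r + / 2 * g * (s * c1 r)) / sqrt (B_half g s (c1 r) (c2 r))); auto.
    apply (filter_imp (fun r => 0 < s * c1 r)); auto. intros r Hr. rewrite EA, EB; auto.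
Qed.

(* K^2 is constant along the loop, and its gradient is 2 J^2 (x, y + g s x). *)
Lemma loop_tangent t s : 0 < t < 1 -> s = 1 \/ s = -1 -> 0 < s * c1 t ->
  c1 t * Derive c1 t + (c2 t + g * s * c1 t) * Derive c2 t = 0.
Proof.
  intros Ht Hs Hsx. destruct (Hsmooth t ltac:(lra)) as (D1 & D2 & _).
  pose proof (is_derive_K2_half_curve g s Hg Hs c1 c2 t (Derive c1 t) (Derive c2 t) Hsx
    (Derive_correct _ _ D1) (Derive_correct _ _ D2)) as D.
  assert (D0 : is_derive (fun r => B_half g s (c1 r) (c2 r) * J2_half g s (c1 r) (c2 r)) t 0).
  { apply is_derive_ext_loc with (fun _ => 1); [|apply (is_derive_const 1)].
    apply (filter_imp (fun r => 0 < s * c1 r /\ 0 < r < 1)).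
    - intros r [Hr Hr']. rewrite <- K2F_half by auto. unfold K2F. rewrite Hon by lra.
      symmetry. apply pow1.
    - apply filter_and; [apply locally_loop_half_plane | apply locally_open_interval]; auto; lra. }
  pose proof (is_derive_unique _ _ _ D) as U. rewrite (is_derive_unique _ _ _ D0) in U.
  assert (0 < J2_half g s (c1 t) (c2 t)) by apply exp_pos. nra.
Qed.

Lemma loop_integrand t : 0 < t < 1 -> c1 t <> 0 ->
  sqrt (gquad g (c1 t) (c2 t) (Derive c1 t) (Derive c2 t)) = Rabs (omega t) / hF g.
Proof.
  intros Ht Hc. destruct (sign_choice _ Hc) as (s & Hs & Hsx).
  pose proof (hF_pos g Hg). pose proof (loop_BF_pos t ltac:(lra)).
  rewrite (gquad_indicatrix_half g s Hg Hs); auto.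
  - replace (Rabs (omega t) / hF g) with (Rabs (omega t / hF g))
      by (unfold Rdiv; rewrite Rabs_mult, Rabs_inv, (Rabs_right (hF g)); lra).
    rewrite <- sqrt_Rsqr_abs, Rsqr_pow2. f_equal. unfold omega. field. lra.
  - unfold K2F. rewrite Hon by lra. apply pow1.
  - apply loop_tangent; auto.
Qed.

Lemma continuous_omega_ext t : continuous (fun r => omega (clamp01 r)) t.
Proof. apply continuous_clamp01_comp, continuous_omega. Qed.

Lemma ex_RInt_omega_ext a b : ex_RInt (fun r => omega (clamp01 r)) a b.
Proof.
  apply (ex_RInt_continuous (V := R_CompleteNormedModule)). intros; apply continuous_omega_ext.
Qed.

Lemma is_derive_theta t : is_derive theta t (omega (clamp01 t)).
Proof.
  apply (is_derive_RInt (fun r => omega (clamp01 r)) theta 0).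
  - apply filter_forall. intros r. exact (RInt_correct _ 0 r (ex_RInt_omega_ext 0 r)).
  - apply continuous_omega_ext.
Qed.

Lemma continuous_theta t : continuous theta t.
Proof. exact (ex_derive_continuous theta t (ex_intro _ _ (is_derive_theta t))). Qed.

Lemma theta_0 : theta 0 = 0.
Proof. exact (RInt_point 0 (fun r => omega (clamp01 r))). Qed.

Lemma theta_diff u v : theta v - theta u = RInt (fun r => omega (clamp01 r)) u v.
Proof.
  unfold theta. rewrite <- (RInt_Chasles _ 0 u v (ex_RInt_omega_ext 0 u) (ex_RInt_omega_ext u v)).
  unfold plus; simpl. ring.
Qed.

Lemma loop_point_inj u v : 0 <= u < 1 -> 0 <= v < 1 ->
  loop_X u = loop_X v -> loop_Y u = loop_Y v -> u = v.
Proof.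
  intros Hu Hv HX HY.
  destruct (indicatrix_inj_circle g Hg (c1 u) (c2 u) (c1 v) (c2 v)) as [E1 E2];
    auto; try apply Hon; lra.
Qed.

(* On the axis the circle point is (0, 1) or (0, -1), and the loop passes each point once. *)
Lemma axis_crossings_finite : exists l, forall t, 0 < t < 1 -> c1 t = 0 -> In t l.
Proof.
  assert (HX0 : forall t, c1 t = 0 -> loop_X t = 0).
  { intros t Ht. unfold loop_X, circle_X. rewrite Ht. unfold Rdiv. ring. }
  destruct (inj_preimage_of_pair_finite (fun t => 0 < t < 1 /\ c1 t = 0) loop_Y 1 (-1))
    as [l Hl].
  - intros u v [Hu Hu0] [Hv Hv0] HY. apply loop_point_inj; try lra.
    rewrite !HX0; auto.
  - intros t [Ht Ht0].
    pose proof (circle_XY_unit g Hg (c1 t) (c2 t) (loop_off_origin t ltac:(lra))) as Hunit.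
    fold (loop_X t) (loop_Y t) in Hunit. rewrite HX0 in Hunit by auto.
    assert (Hroots : (loop_Y t - 1) * (loop_Y t + 1) = 0) by nra.
    apply Rmult_integral in Hroots. lra.
  - exists l. intros t Ht Ht0. apply Hl. auto.
Qed.

Lemma loop_rotation t : 0 <= t <= 1 ->
  loop_X t = loop_X 0 * cos (theta t) - loop_Y 0 * sin (theta t) /\
  loop_Y t = loop_X 0 * sin (theta t) + loop_Y 0 * cos (theta t).
Proof.
  intros Ht. destruct axis_crossings_finite as [l Hl].
  apply (rotation_of_angular_velocity loop_X loop_Y theta (fun r => omega (clamp01 r)) l 0 t);
    [lra | apply theta_0 | |].
  - intros r Hr.
    repeat split; [apply continuous_loop_X | apply continuous_loop_Y | apply continuous_theta]; lra.
  - intros r Hr Hnl. assert (Hc : c1 r <> 0) by (intros E; apply Hnl, Hl; auto; lra).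
    destruct (is_derive_loop_circle r ltac:(lra) Hc) as [DX DY].
    split; [|split]; try apply is_derive_theta; rewrite clamp01_id by lra; auto.
Qed.

Lemma theta_inj u v : 0 <= u < 1 -> 0 <= v < 1 -> theta u = theta v -> u = v.
Proof.
  intros Hu Hv E. destruct (loop_rotation u ltac:(lra)), (loop_rotation v ltac:(lra)).
  apply loop_point_inj; auto; congruence.
Qed.

Lemma cos_theta_1 : cos (theta 1) = 1.
Proof.
  destruct (loop_rotation 1 ltac:(lra)) as [HX HY].
  assert (E1 : loop_X 1 = loop_X 0) by (unfold loop_X; rewrite Hclosed1, Hclosed2; auto).
  assert (E2 : loop_Y 1 = loop_Y 0) by (unfold loop_Y; rewrite Hclosed1, Hclosed2; auto).
  pose proof (circle_XY_unit g Hg (c1 0) (c2 0) (loop_off_origin 0 ltac:(lra))) as Hunit.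
  fold (loop_X 0) (loop_Y 0) in Hunit. rewrite E1 in HX. rewrite E2 in HY.
  transitivity (loop_X 0 * (loop_X 0 * cos (theta 1) - loop_Y 0 * sin (theta 1))
                + loop_Y 0 * (loop_X 0 * sin (theta 1) + loop_Y 0 * cos (theta 1))).
  - transitivity (cos (theta 1) * (loop_X 0 * loop_X 0 + loop_Y 0 * loop_Y 0));
      [rewrite Hunit|]; ring.
  - rewrite <- HX, <- HY. exact Hunit.
Qed.

Lemma theta_no_return t : 0 < t < 1 -> cos (theta t) = 1 -> sin (theta t) = 0 -> False.
Proof.
  intros Ht C S. destruct (loop_rotation t ltac:(lra)) as [HX HY].
  assert (t = 0); [|lra]. apply loop_point_inj; try lra.
  - rewrite HX, C, S. ring.
  - rewrite HY, C, S. ring.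
Qed.

Lemma RInt_scaled_omega e u v :
  RInt (fun r => e * omega (clamp01 r)) u v = e * (theta v - theta u).
Proof. rewrite theta_diff. exact (RInt_scal _ u v e (ex_RInt_omega_ext u v)). Qed.

Lemma omega_constant_sign : exists e, (e = 1 \/ e = -1) /\ forall t, 0 < t < 1 -> 0 <= e * omega t.
Proof.
  destruct (continuous_inj_monotone theta 0 1 continuous_theta) as (e & He & Hinc).
  { intros u v Hu Hv. apply theta_inj; lra. }
  exists e. split; auto. intros t Ht. rewrite <- (clamp01_id t) by lra.
  apply (nonneg_of_increasing_primitive
           (fun r => e * omega (clamp01 r)) (fun r => e * theta r) 0 1); auto.
  - intros r. pose proof (continuous_omega_ext r). continuous_R. auto.
  - intros u v. rewrite RInt_scaled_omega. ring.
Qed.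

Lemma theta_winding e : (e = 1 \/ e = -1) -> (forall t, 0 < t < 1 -> 0 <= e * omega t) ->
  e * theta 1 = 2 * PI.
Proof.
  intros He Hpos. apply (first_return_2PI (fun t => e * theta t)).
  - intros t. pose proof (continuous_theta t). continuous_R. auto.
  - rewrite theta_0. ring.
  - intros u v Hu Huv Hv. apply Rminus_le.
    assert (0 <= RInt (fun r => e * omega (clamp01 r)) u v); [|rewrite RInt_scaled_omega in *; lra].
    apply RInt_ge_0; auto.
    + apply (ex_RInt_continuous (V := R_CompleteNormedModule)). intros r _.
      pose proof (continuous_omega_ext r). continuous_R. auto.
    + intros r Hr. rewrite clamp01_id by lra. apply Hpos. lra.
  - rewrite cos_sign_mult by auto. apply cos_theta_1.
  - intros t Ht C S. rewrite cos_sign_mult in C by auto. rewrite sin_sign_mult in S by auto.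
    apply (theta_no_return t Ht C). destruct He as [-> | ->]; lra.
Qed.

Lemma loop_finsler_length :
  is_RInt (fun t => sqrt (gquad g (c1 t) (c2 t) (Derive c1 t) (Derive c2 t))) 0 1 (2 * PI / hF g).
Proof.
  destruct axis_crossings_finite as [l Hl]. destruct omega_constant_sign as (e & He & Hpos).
  pose proof (theta_winding e He Hpos) as Hwind. pose proof (hF_pos g Hg).
  apply (is_RInt_ext_except _ (fun t => e / hF g * omega (clamp01 t)) l); [lra | |].
  - intros t Ht Hnl. assert (Hc : c1 t <> 0) by (intros E; apply Hnl, Hl; auto).
    rewrite loop_integrand, clamp01_id, (Rabs_sign_mult e) by (auto; lra). field. lra.
  - replace (2 * PI / hF g) with (e / hF g * theta 1) by (rewrite <- Hwind; field; lra).
    exact (is_RInt_scal _ 0 1 (e / hF g) _ (RInt_correct _ 0 1 (ex_RInt_omega_ext 0 1))).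
Qed.

End IndicatrixLoop.

Theorem theorem1p3 :
  (forall g : R, -2 < g < 2 ->
     (forall c1 c2 : R -> R, indicatrix_loop g c1 c2 ->
        finsler_length_is g c1 c2 (2 * PI / hF g)) /\
     2 * PI / hF g >= 2 * PI /\
     (2 * PI / hF g = 2 * PI <-> g = 0)) /\
  filterlim (fun g => 2 * PI / hF g) (at_left 2) (Rbar_locally p_infty) /\
  filterlim (fun g => 2 * PI / hF g) (at_right (-2)) (Rbar_locally p_infty).
Proof.
  split; [|split; [apply length_unbounded_left | apply length_unbounded_right]].
  intros g Hg. split; [|split; [apply length_ge_2PI | apply length_eq_2PI_iff]; auto].
  intros c1 c2 (Hsmooth & Hon & _ & Hclosed1 & Hclosed2 & Hsimple).
  exact (loop_finsler_length g c1 c2 Hg Hsmooth Hon Hclosed1 Hclosed2 Hsimple).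
Qed.
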